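(* Assume that for all $0\le i,j\le d$: $E^*_iAE^*_j=0$ if $|i-j|>1$, and $E^*_iAE^*_j\ne0$ if $|i-j|=1$. Then there exists a unique antiautomorphism $\dagger$ of $\mathcal A$ such that $A^\dagger=A$ and $A^{*\dagger}=A^*$. Moreover $X^{\dagger\dagger}=X$ for all $X\in\mathcal A$.
   Context: Let $\mathbb K$ be a field, $d\ge 0$ an integer, and $\mathcal A$ a $\mathbb K$-algebra isomorphic to $\mathrm{Mat}_{d+1}(\mathbb K)$, with identity $I$. An element of $\mathcal A$ is multiplicity-free if it has $d+1$ mutually distinct eigenvalues, all in $\mathbb K$; for such $A$ with eigenvalues $\theta_0,\ldots,\theta_d$, the primitive idempotent associated with $\theta_i$ is $E_i=\prod_{j\ne i}(A-\theta_jI)/(\theta_i-\theta_j)$. Standing setup: $A,A^*$ are multiplicity-free elements of $\mathcal A$ ($A^*$ is just a name, not an adjoint); $E^*_0,\ldots,E^*_d$ is an ordering of the primitive idempotents of $A^*$. An antiautomorphism of $\mathcal A$ is a $\mathbb K$-linear bijection $\sigma:\mathcal A\to\mathcal A$ with $(XY)^\sigma=Y^\sigma X^\sigma$ for all $X,Y\in\mathcal A$. *)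

From HB Require Import structures.
From mathcomp Require Import all_boot all_order all_algebra.
Set Implicit Arguments. Unset Strict Implicit. Unset Printing Implicit Defensive.
Import GRing.Theory.
Local Open Scope ring_scope.

(* The algebra A ~ Mat_{d+1}(K) is realised as 'M[K]_(d.+1). *)

Definition eigen_ordering (K : fieldType) (d : nat) (M : 'M[K]_(d.+1))
  (th : 'I_(d.+1) -> K) : Prop :=
  injective th /\ forall i, eigenvalue M (th i).

Definition multiplicity_free (K : fieldType) (d : nat) (M : 'M[K]_(d.+1)) : Prop :=
  exists th : 'I_(d.+1) -> K, eigen_ordering M th.

Definition prim_idem (K : fieldType) (d : nat) (M : 'M[K]_(d.+1))
  (th : 'I_(d.+1) -> K) (i : 'I_(d.+1)) : 'M[K]_(d.+1) :=
  \prod_(j < d.+1 | j != i) ((th i - th j)^-1 *: (M - (th j)%:M)).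

Definition antiautomorphism (K : fieldType) (d : nat)
  (s : 'M[K]_(d.+1) -> 'M[K]_(d.+1)) : Prop :=
  [/\ forall (c : K) (X Y : 'M[K]_(d.+1)), s (c *: X + Y) = c *: s X + s Y,
      bijective s &
      forall X Y : 'M[K]_(d.+1), s (X *m Y) = s Y *m s X].

From HB Require Import structures.
From mathcomp Require Import all_boot all_order all_algebra.
From mathcomp Require Import ring zify.
Import GRing.Theory.
Local Open Scope ring_scope.
Set Implicit Arguments.
Unset Strict Implicit.

(* Choose a matrix Q whose rows are eigenvectors of A*.  Conjugation by Q turns
   the E*_i into the diagonal matrix units e_ii and A into a matrix B that is
   tridiagonal with nonzero entries next to the diagonal.  Such a B is
   symmetrised by a diagonal matrix W, so X |-> W X^T W^-1 is an involutive
   antiautomorphism fixing B and every diagonal matrix; conjugating back by Q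
   gives the required antiautomorphism.  It is unique because E*_i and
   E*_i A E*_(i+-1) span the matrix units e_ii, e_i(i+-1) in the Q-basis, which
   generate the whole algebra, so an antiautomorphism is determined by its
   values on A and A*. *)

Section MatrixSubalgebra.
Variables (K : fieldType) (n : nat).
Implicit Types (P : 'M[K]_n.+1 -> Prop) (X Y : 'M[K]_n.+1).

Definition subalg_pred P :=
  [/\ P 1%:M, forall c X Y, P X -> P Y -> P (c *: X + Y)
    & forall X Y, P X -> P Y -> P (X *m Y)].

Section Closure.
Variables (P : 'M[K]_n.+1 -> Prop) (hP : subalg_pred P).

Lemma subalg_pred0 : P 0.
Proof. by case: hP => P1 PL _; rewrite -(addNr 1%:M) -scaleN1r; apply: PL. Qed.

Lemma subalg_predZ c X : P X -> P (c *: X).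
Proof.
by case: hP => _ PL _ PX; rewrite -[_ *: _]addr0; apply: PL => //; exact: subalg_pred0.
Qed.

Lemma subalg_predD X Y : P X -> P Y -> P (X + Y).
Proof. by case: hP => _ PL _ PX PY; rewrite -[X]scale1r; apply: PL. Qed.

Lemma subalg_predM X Y : P X -> P Y -> P (X *m Y).
Proof. by case: hP => _ _; apply. Qed.

Lemma subalg_pred_prim_idem (M : 'M[K]_n.+1) th i : P M -> P (prim_idem M th i).
Proof.
case: hP => P1 _ _ PM; apply: (big_ind P) => // [|j _]; first exact: subalg_predM.
apply/subalg_predZ/subalg_predD => //.
by rewrite -scalemx1 -scaleNr; apply: subalg_predZ.
Qed.

Lemma subalg_pred_conj (Q : 'M[K]_n.+1) :
  Q \in unitmx -> subalg_pred (fun Y => P (invmx Q *m Y *m Q)).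
Proof.
case: hP => P1 PL PM uQ; split.
- by rewrite mulmx1 mulVmx.
- move=> c X Y PX PY.
  by rewrite mulmxDr mulmxDl -scalemxAr -scalemxAl; apply: PL.
- move=> X Y PX PY; have -> : invmx Q *m (X *m Y) *m Q =
      (invmx Q *m X *m Q) *m (invmx Q *m Y *m Q) by rewrite !mulmxA mulmxK.
  exact: PM.
Qed.

Lemma subalg_pred_matrix_units :
  (forall i, P (delta_mx i i)) ->
  (forall i j : 'I_n.+1, i.+1 = j -> P (delta_mx i j) /\ P (delta_mx j i)) ->
  forall X, P X.
Proof.
move=> Pdiag Padj.
have Pup k (i j : 'I_n.+1) : (i + k)%N = j -> P (delta_mx i j) /\ P (delta_mx j i).
  elim: k j => [|k IHk] j.
    by rewrite addn0 => /ord_inj ->.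
  move=> ikj; have lt_ik : (i + k < n.+1)%N by have := ltn_ord j; lia.
  have [Pik Pki] := IHk (Ordinal lt_ik) erefl.
  have [|Pkj Pjk] := Padj (Ordinal lt_ik) j; first by rewrite /= -addnS.
  rewrite -[delta_mx i j](mul_delta_mx (Ordinal lt_ik)).
  by rewrite -[delta_mx j i](mul_delta_mx (Ordinal lt_ik)); split; apply: subalg_predM.
have Pdelta i j : P (delta_mx i j).
  have [le_ij|lt_ji] := leqP i j; first by have [] := Pup (j - i)%N i j (subnKC le_ij).
  by have [] := Pup (i - j)%N j i (subnKC (ltnW lt_ji)).
move=> X; rewrite (matrix_sum_delta X); apply: (big_ind P) => [||i _].
- exact: subalg_pred0.
- exact: subalg_predD.
apply: (big_ind P) => [||j _]; [exact: subalg_pred0 | exact: subalg_predD |].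
exact: subalg_predZ.
Qed.

End Closure.
End MatrixSubalgebra.

Lemma conjmx_invK (K : fieldType) n (Q X : 'M[K]_n.+1) :
  Q \in unitmx -> invmx Q *m (Q *m X *m invmx Q) *m Q = X.
Proof. by move=> uQ; rewrite !mulmxA mulVmx // mul1mx mulmxKV. Qed.

Lemma conjmxK_inv (K : fieldType) n (Q X : 'M[K]_n.+1) :
  Q \in unitmx -> Q *m (invmx Q *m X *m Q) *m invmx Q = X.
Proof. by move=> uQ; rewrite !mulmxA mulmxV // mul1mx mulmxK. Qed.

Section Antiautomorphism.
Variables (K : fieldType) (n : nat).
Implicit Types (s t : 'M[K]_n.+1 -> 'M[K]_n.+1) (Q X Y : 'M[K]_n.+1).

Lemma antiautomorphism1 s : antiautomorphism s -> s 1%:M = 1%:M.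
Proof.
case=> _ [s' ss' s's] sM.
by rewrite -[RHS](s's 1%:M) -[s' _]mul1mx sM s's mul1mx.
Qed.

Lemma antiautomorphism_eq_subalg s t :
  antiautomorphism s -> antiautomorphism t -> subalg_pred (fun X => s X = t X).
Proof.
move=> sA tA; have [sL _ sM] := sA; have [tL _ tM] := tA; split.
- by rewrite !antiautomorphism1.
- by move=> c X Y eX eY; rewrite sL tL eX eY.
- by move=> X Y eX eY; rewrite sM tM eX eY.
Qed.

Lemma antiautomorphism_conj s Q : Q \in unitmx -> antiautomorphism s ->
  antiautomorphism (fun X => invmx Q *m s (Q *m X *m invmx Q) *m Q).
Proof.
move=> uQ [sL [s' ss' s's] sM]; split.
- move=> c X Y; rewrite mulmxDr mulmxDl -scalemxAr -scalemxAl sL.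
  by rewrite mulmxDr mulmxDl -scalemxAr -scalemxAl.
- exists (fun X => invmx Q *m s' (Q *m X *m invmx Q) *m Q) => X;
  by rewrite conjmxK_inv // ?ss' ?s's conjmx_invK.
- move=> X Y; have -> : Q *m (X *m Y) *m invmx Q =
      (Q *m X *m invmx Q) *m (Q *m Y *m invmx Q) by rewrite !mulmxA mulmxKV.
  by rewrite sM !mulmxA mulmxK.
Qed.

End Antiautomorphism.

Section TwistedTranspose.
Variables (K : fieldType) (n : nat) (w : 'I_n.+1 -> K).
Hypothesis w_neq0 : forall i, w i != 0.

(* X |-> W X^T W^-1 for W = diag_mx w. *)
Definition twisted_trmx (Y : 'M[K]_n.+1) : 'M[K]_n.+1 :=
  \matrix_(i, j) (w i / w j * Y j i).

Lemma twisted_trmxK : involutive twisted_trmx.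
Proof. by move=> Y; apply/matrixP => i j; rewrite !mxE; field; rewrite ?w_neq0. Qed.

Lemma twisted_trmx_anti : antiautomorphism twisted_trmx.
Proof.
split.
- by move=> c X Y; apply/matrixP => i j; rewrite !mxE; ring.
- by exists twisted_trmx; apply: twisted_trmxK.
- move=> X Y; apply/matrixP => i j; rewrite !mxE mulr_sumr.
  by apply: eq_bigr => k _; rewrite !mxE; field; rewrite ?w_neq0.
Qed.

Lemma twisted_trmx_id (X : 'M[K]_n.+1) :
  (forall i j, w i * X j i = X i j * w j) -> twisted_trmx X = X.
Proof.
move=> wX; apply/matrixP => i j; rewrite !mxE mulrAC wX.
by rewrite -mulrA mulfV ?mulr1.
Qed.

Lemma twisted_trmx_diag (D : 'rV[K]_n.+1) : twisted_trmx (diag_mx D) = diag_mx D.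
Proof.
apply: twisted_trmx_id => i j; rewrite !mxE.
case: eqVneq => [->|_]; first by rewrite mulrC.
by rewrite !mulr0n mulr0 mul0r.
Qed.

End TwistedTranspose.

Section Tridiagonal.
Variables (K : fieldType) (n : nat) (B : 'M[K]_n.+1).
Hypothesis B_far : forall i j : 'I_n.+1, (i.+1 < j)%N || (j.+1 < i)%N -> B i j = 0.
Hypothesis B_adj : forall i j : 'I_n.+1, i.+1 = j -> B i j != 0 /\ B j i != 0.

Definition tridiag_weight (i : 'I_n.+1) : K :=
  \prod_(k < i) (B (inord k.+1) (inord k) / B (inord k) (inord k.+1)).

Lemma tridiag_weight_neq0 i : tridiag_weight i != 0.
Proof.
rewrite prodf_seq_neq0; apply/allP => k _ /=.
have lt_k : (k < n)%N by have := ltn_ord i; have := ltn_ord k; lia.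
have [] := @B_adj (inord k) (inord k.+1); first by rewrite !inordK //; lia.
by move=> h1 h2; rewrite mulf_neq0 ?invr_eq0.
Qed.

Lemma tridiag_weight_sym i j :
  tridiag_weight i * B j i = B i j * tridiag_weight j.
Proof.
wlog le_ij : i j / (i <= j)%N.
  by move=> wl; have [/wl//|/ltnW/wl] := leqP i j; rewrite mulrC => ->; rewrite mulrC.
have [/ord_inj->|ne_ij] := eqVneq (i : nat) j; first by rewrite mulrC.
have [ji|ne_ji] := eqVneq (j : nat) i.+1; last first.
  by rewrite !B_far ?mulr0 ?mul0r //; move: ne_ij ne_ji; lia.
have [Bij _] := B_adj (esym ji).
rewrite /tridiag_weight ji big_ord_recr /= -ji !inord_val.
by field.
Qed.

End Tridiagonal.

Section Eigenbasis.
Variables (K : fieldType) (n : nat) (M : 'M[K]_n.+1) (th : 'I_n.+1 -> K).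
Hypothesis th_inj : injective th.

Definition eigenbasis (Q : 'M[K]_n.+1) := forall k, row k Q *m M = th k *: row k Q.

Lemma prim_idem_eigenrow k i (v : 'rV[K]_n.+1) :
  v *m M = th k *: v -> v *m prim_idem M th i = (k == i)%:R *: v.
Proof.
move=> vM; have -> : v *m prim_idem M th i =
    (\prod_(j < n.+1 | j != i) ((th i - th j)^-1 * (th k - th j))) *: v.
  rewrite /prim_idem; elim/big_rec2: _ => [|j c E _ IH]; first by rewrite scale1r mulmx1.
  rewrite -mulmxE mulmxA -scalemxAr mulmxBr vM mul_mx_scalar -scalerBl.
  by rewrite -!scalemxAl IH !scalerA.
have [<-|ne_ki] := eqVneq k i; last by rewrite (bigD1 k) //= subrr !mulr0 mul0r.
rewrite big1 // => j ne_jk; rewrite mulVf // subr_eq0.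
by apply: contra ne_jk => /eqP /th_inj ->.
Qed.

Lemma eigenbasis_prim_idem Q i :
  eigenbasis Q -> Q *m prim_idem M th i = delta_mx i i *m Q.
Proof.
move=> QM; apply/row_matrixP => k; rewrite !row_mul (prim_idem_eigenrow _ (QM k)).
rewrite [row k (delta_mx _ _)]rowE mul_delta_mx_cond.
by case: eqVneq => [->|]; rewrite ?scale1r ?scale0r ?mul0mx -?rowE.
Qed.

Lemma eigenbasis_unit Q : (forall k, row k Q != 0) -> eigenbasis Q -> Q \in unitmx.
Proof.
move=> Q_neq0 QM; rewrite -row_free_unit -kermx_eq0; apply/eqP/row_matrixP => k.
rewrite row0; set c := row k (kermx Q).
have cQ : c *m Q = 0 by rewrite -row_mul mulmx_ker row0.
clearbody c; apply/rowP => i; rewrite mxE.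
have : c *m (Q *m prim_idem M th i) = 0 by rewrite mulmxA cQ mul0mx.
rewrite eigenbasis_prim_idem // mulmxA.
have -> : c *m delta_mx i i = c 0 i *: delta_mx 0 i.
  apply/rowP => j; rewrite !mxE (bigD1 i) //= big1 => [|l /negPf ne_li].
    by rewrite !mxE !eqxx addr0; case: eqVneq; rewrite ?mulr1 ?mulr0.
  by rewrite !mxE ne_li mulr0.
rewrite -scalemxAl -rowE => /eqP.
by rewrite scaler_eq0 (negPf (Q_neq0 i)) orbF => /eqP.
Qed.

Lemma eigenbasis_exists : (forall i, eigenvalue M (th i)) ->
  exists2 Q, Q \in unitmx & eigenbasis Q.
Proof.
move=> th_eigen.
have eigvec i : exists v : 'rV[K]_n.+1, (v *m M == th i *: v) && (v != 0).
  by have /eigenvalueP [v vM v_neq0] := th_eigen i; exists v; rewrite vM eqxx.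
pose Q := \matrix_(i, j) xchoose (eigvec i) 0 j.
have rowQ i : row i Q = xchoose (eigvec i) by apply/rowP => j; rewrite !mxE.
have QM : eigenbasis Q.
  by move=> k; rewrite rowQ; case/andP: (xchooseP (eigvec k)) => /eqP.
exists Q => //; apply: eigenbasis_unit => // k.
by rewrite rowQ; case/andP: (xchooseP (eigvec k)).
Qed.

Lemma eigenbasis_prim_idemE Q i : Q \in unitmx -> eigenbasis Q ->
  prim_idem M th i = invmx Q *m delta_mx i i *m Q.
Proof. by move=> uQ QM; rewrite -mulmxA -eigenbasis_prim_idem // mulKmx. Qed.

Lemma eigenbasis_diag Q : eigenbasis Q -> Q *m M = diag_mx (\row_k th k) *m Q.
Proof.
move=> QM; apply/row_matrixP => k; rewrite row_mul QM mul_diag_mx.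
by apply/rowP => j; rewrite !mxE.
Qed.

End Eigenbasis.

Lemma mul_delta_mx_diag (K : fieldType) n (B : 'M[K]_n) i j :
  delta_mx i i *m B *m delta_mx j j = B i j *: delta_mx i j.
Proof.
apply/matrixP => a b; rewrite !mxE (bigD1 j) //= big1 => [|l /negPf ne_lj]; last first.
  by rewrite !mxE ne_lj mulr0.
rewrite !mxE (bigD1 i) //= big1 => [|l /negPf ne_li]; last first.
  by rewrite !mxE ne_li andbF mul0r.
rewrite !mxE !eqxx !addr0 /=.
by case: (a == i); case: (b == j); rewrite /= ?(mulr0, mul0r, mulr1, mul1r).
Qed.

Section ConjugateMatrixUnits.
Variables (K : fieldType) (n : nat) (Q : 'M[K]_n.+1).
Hypothesis Q_unit : Q \in unitmx.

Lemma conj_delta_mx_neq0 i j : invmx Q *m delta_mx i j *m Q != 0.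
Proof.
apply: contraTneq isT => /(congr1 (fun X => Q *m X *m invmx Q)).
rewrite conjmxK_inv // mulmx0 mul0mx => /matrixP /(_ i j).
by rewrite !mxE !eqxx /= => /eqP; rewrite oner_eq0.
Qed.

Lemma conj_delta_mx_sandwich (B : 'M[K]_n.+1) i j :
  (invmx Q *m delta_mx i i *m Q) *m (invmx Q *m B *m Q) *m (invmx Q *m delta_mx j j *m Q)
  = B i j *: (invmx Q *m delta_mx i j *m Q).
Proof.
transitivity (invmx Q *m (delta_mx i i *m B *m delta_mx j j) *m Q).
  by rewrite !mulmxA !mulmxK.
by rewrite mul_delta_mx_diag -scalemxAr -scalemxAl.
Qed.

End ConjugateMatrixUnits.

Section TridiagonalGeneration.
Variables (K : fieldType) (n : nat) (A As Q : 'M[K]_n.+1) (th : 'I_n.+1 -> K).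
Hypotheses (th_inj : injective th) (Q_unit : Q \in unitmx) (Q_eigen : eigenbasis As th Q).
Let B := Q *m A *m invmx Q.

Lemma prim_idem_sandwich i j :
  prim_idem As th i *m A *m prim_idem As th j = B i j *: (invmx Q *m delta_mx i j *m Q).
Proof.
rewrite !(eigenbasis_prim_idemE th_inj _ Q_unit Q_eigen).
by rewrite -conj_delta_mx_sandwich // conjmx_invK.
Qed.

Lemma prim_idem_sandwich_eq0 i j :
  (prim_idem As th i *m A *m prim_idem As th j == 0) = (B i j == 0).
Proof.
by rewrite prim_idem_sandwich scaler_eq0 (negPf (conj_delta_mx_neq0 _ _ _)) ?orbF.
Qed.

Lemma tridiagonal_pair_generates (P : 'M[K]_n.+1 -> Prop) :
  (forall i j : 'I_n.+1, i.+1 = j -> B i j != 0 /\ B j i != 0) ->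
  subalg_pred P -> P A -> P As -> forall X, P X.
Proof.
move=> B_adj hP PA PAs X; rewrite -(conjmx_invK X Q_unit).
have PE i : P (prim_idem As th i) by apply: subalg_pred_prim_idem.
have PG i j : B i j != 0 -> P (invmx Q *m delta_mx i j *m Q).
  move=> Bij; rewrite -[_ *m Q]scale1r -(mulVf Bij) -scalerA -prim_idem_sandwich.
  by apply/(subalg_predZ hP)/(subalg_predM hP)/PE/(subalg_predM hP).
apply: (subalg_pred_matrix_units (subalg_pred_conj hP Q_unit)) => [i|i j ij].
  by rewrite -(eigenbasis_prim_idemE th_inj _ Q_unit Q_eigen).
by have [] := B_adj i j ij; split; apply: PG.
Qed.

End TridiagonalGeneration.

Theorem lemma5p4 (K : fieldType) (d : nat) (A As : 'M[K]_(d.+1))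
  (ths : 'I_(d.+1) -> K) :
  multiplicity_free A ->
  eigen_ordering As ths ->
  (forall i j : 'I_(d.+1), ((i.+1 < j)%N || (j.+1 < i)%N) ->
     prim_idem As ths i *m A *m prim_idem As ths j = 0) ->
  (forall i j : 'I_(d.+1), ((i.+1 == j) || (j.+1 == i)) ->
     prim_idem As ths i *m A *m prim_idem As ths j != 0) ->
  exists s : 'M[K]_(d.+1) -> 'M[K]_(d.+1),
    [/\ antiautomorphism s, s A = A, s As = As,
        (forall t : 'M[K]_(d.+1) -> 'M[K]_(d.+1),
           antiautomorphism t -> t A = A -> t As = As -> forall X, t X = s X) &
        forall X, s (s X) = X].
Proof.
move=> _ [ths_inj ths_eigen] EAE_far EAE_adj.
have [Q Q_unit Q_eigen] := eigenbasis_exists ths_inj ths_eigen.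
have B_eq0 := prim_idem_sandwich_eq0 A ths_inj Q_unit Q_eigen.
set B := Q *m A *m invmx Q in B_eq0.
have B_far (i j : 'I_d.+1) : (i.+1 < j)%N || (j.+1 < i)%N -> B i j = 0.
  by move=> ij; apply/eqP; rewrite -B_eq0 EAE_far.
have B_adj (i j : 'I_d.+1) : i.+1 = j -> B i j != 0 /\ B j i != 0.
  by move=> ij; rewrite -!B_eq0; split; apply: EAE_adj; rewrite ij eqxx ?orbT.
have w_neq0 := tridiag_weight_neq0 B_adj.
pose sigma X := invmx Q *m twisted_trmx (tridiag_weight B) (Q *m X *m invmx Q) *m Q.
have sigma_anti : antiautomorphism sigma.
  exact: antiautomorphism_conj Q_unit (twisted_trmx_anti w_neq0).
have sigmaA : sigma A = A.
  rewrite /sigma -/B twisted_trmx_id ?conjmx_invK // => i j.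
  exact: tridiag_weight_sym B_far B_adj i j.
have sigmaAs : sigma As = As.
  rewrite /sigma (eigenbasis_diag Q_eigen) mulmxK // twisted_trmx_diag //.
  by rewrite -mulmxA -(eigenbasis_diag Q_eigen) mulKmx.
exists sigma; split => // [t t_anti tA tAs|X].
  apply: (tridiagonal_pair_generates ths_inj Q_unit Q_eigen B_adj).
  - exact: antiautomorphism_eq_subalg.
  - by rewrite tA sigmaA.
  - by rewrite tAs sigmaAs.
by rewrite /sigma conjmxK_inv // twisted_trmxK // conjmx_invK.
Qed.
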